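(* Let $\beta\in\mathbb{F}_{p^m}\setminus\{0\}$. The $(\alpha+\beta u)$-constacyclic codes of length $4p^s$ over $R$, i.e. the ideals of $\mathcal{R}_{\alpha,\beta}=R[x]/\langle x^{4p^s}-(\alpha+\beta u)\rangle$, are exactly the principal ideals $$\left\langle\left(x^2+\gamma x+\tfrac{\gamma^2}{2}\right)^i\left(x^2-\gamma x+\tfrac{\gamma^2}{2}\right)^j\right\rangle,\qquad 0\le i,j\le 2p^s.$$
   Context: Let $p$ be an odd prime and $m,s$ positive integers with $p^m\equiv 3\pmod 4$; $\mathbb{F}_{p^m}$ is the field with $p^m$ elements and $R=\mathbb{F}_{p^m}[u]/\langle u^2\rangle$. Fix $\alpha\in\mathbb{F}_{p^m}\setminus\{0\}$ that is not a square in $\mathbb{F}_{p^m}$, let $\alpha_0\in\mathbb{F}_{p^m}$ satisfy $\alpha_0^{p^s}=\alpha$, and let $\gamma\in\mathbb{F}_{p^m}$ satisfy $\gamma^4+4\alpha_0=0$. For a unit $\lambda\in R$, a $\lambda$-constacyclic code of length $n$ over $R$ is an $R$-submodule $\mathcal{C}\subseteq R^n$ closed under $(c_0,\dots,c_{n-1})\mapsto(\lambda c_{n-1},c_0,\dots,c_{n-2})$; via $(c_0,\dots,c_{n-1})\mapsto\sum c_ix^i$ these are identified with the ideals of $R[x]/\langle x^n-\lambda\rangle$. *)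

From HB Require Import structures.
From mathcomp Require Import all_boot all_order all_algebra all_field.
Set Implicit Arguments. Unset Strict Implicit. Unset Printing Implicit Defensive.
Import GRing.Theory.
Local Open Scope ring_scope.

(* The ring R = F[u]/<u^2> of dual numbers over a field F:                   *)
(* the element Dual a b stands for a + b u.                                 *)
Section DualNumbers.
Variable F : fieldType.

Inductive dual : Type := Dual of F & F.

Definition dre (z : dual) := let: Dual a _ := z in a.
Definition dim (z : dual) := let: Dual _ b := z in b.

Definition dual_to_prod (z : dual) : F * F := (dre z, dim z).
Definition prod_to_dual (z : F * F) : dual := Dual z.1 z.2.
Lemma dual_to_prodK : cancel dual_to_prod prod_to_dual. Proof. by case. Qed.

HB.instance Definition _ := Choice.copy dual (can_type dual_to_prodK).

Definition dual_zero := Dual 0 0.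
Definition dual_opp z := Dual (- dre z) (- dim z).
Definition dual_add z w := Dual (dre z + dre w) (dim z + dim w).

Lemma dual_addA : associative dual_add.
Proof. by case=> a b [c d] [e f]; rewrite /dual_add /= !addrA. Qed.
Lemma dual_addC : commutative dual_add.
Proof. by case=> a b [c d]; rewrite /dual_add /= addrC [b + _]addrC. Qed.
Lemma dual_add0 : left_id dual_zero dual_add.
Proof. by case=> a b; rewrite /dual_add /= !add0r. Qed.
Lemma dual_addN : left_inverse dual_zero dual_opp dual_add.
Proof. by case=> a b; rewrite /dual_add /= !addNr. Qed.

HB.instance Definition _ := GRing.isZmodule.Build dual
  dual_addA dual_addC dual_add0 dual_addN.

Definition dual_one := Dual 1 0.
(* (a + b u)(c + d u) = ac + (ad + bc) u, since u^2 = 0 *)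
Definition dual_mul z w :=
  Dual (dre z * dre w) (dre z * dim w + dim z * dre w).

Lemma dual_mulA : associative dual_mul.
Proof.
case=> a b [c d] [e f]; rewrite /dual_mul /=.
by rewrite !mulrA !mulrDl !mulrDr !mulrA !addrA.
Qed.
Lemma dual_mulC : commutative dual_mul.
Proof. by case=> a b [c d]; rewrite /dual_mul /= mulrC addrC [a * d]mulrC [b * c]mulrC. Qed.
Lemma dual_mul1 : left_id dual_one dual_mul.
Proof. by case=> a b; rewrite /dual_mul /= !mul1r mul0r addr0. Qed.
Lemma dual_mulDl : left_distributive dual_mul dual_add.
Proof.
case=> a b [c d] [e f]; rewrite /dual_mul /dual_add /=.
rewrite !mulrDl; congr Dual; rewrite -!addrA; congr (_ + _).
by rewrite addrCA.
Qed.
Lemma dual_one_neq0 : dual_one != dual_zero.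
Proof. by apply/eqP=> -[] /eqP; rewrite oner_eq0. Qed.

HB.instance Definition _ := GRing.Zmodule_isComNzRing.Build dual
  dual_mulA dual_mulC dual_mul1 dual_mulDl dual_one_neq0.

Definition demb (a : F) : dual := Dual a 0.

End DualNumbers.

Section Constacyclic.
Variable R : comNzRingType.

Definition cshift (n : nat) (lam : R) (c : 'rV[R]_n) : 'rV[R]_n :=
  \row_(i < n) ((if val i == 0%N then lam else 1) * c 0 (ord_pred i)).

Definition constacyclic_code (n : nat) (lam : R) (C : 'rV[R]_n -> Prop) : Prop :=
  [/\ C 0,
      (forall x y, C x -> C y -> C (x + y)),
      (forall (r : R) x, C x -> C (r *: x)) &
      (forall x, C x -> C (cshift lam x))].

Definition word_poly (n : nat) (c : 'rV[R]_n) : {poly R} :=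
  \sum_(i < n) (c 0 i)%:P * 'X^i.

(* c, viewed as an element of R[x]/<x^n - lam>, lies in the principal ideal
   generated by (the class of) g *)
Definition in_principal (n : nat) (lam : R) (g : {poly R}) (c : 'rV[R]_n) : Prop :=
  exists a b : {poly R}, word_poly c = a * g + b * ('X^n - lam%:P).

End Constacyclic.

(* Write lambda = alpha + beta u.  The lift of e = x^n - alpha from F[x] to R[x] is
   congruent to beta u modulo x^n - lambda; as (beta u)^2 = 0 and beta is a unit,
   u = beta^-1 e and e^2 = 0 modulo x^n - lambda.  Hence lifting induces an
   isomorphism F[x]/<e^2> = R[x]/<x^n - lambda>, and the lambda-constacyclic codes
   correspond to the ideals of F[x] containing e^2, i.e. to the divisors of e^2.
   In characteristic p, e = (x^4 - alpha0)^(p^s) = (f1 f2)^(p^s), where f1 and f2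
   are coprime irreducible quadratics: a root of f1 would make alpha0, hence alpha,
   a square.  So the divisors of e^2 are, up to units, the f1^i f2^j, i, j <= 2p^s. *)

From Pilot Require Import Defs.
From HB Require Import structures.
From mathcomp Require Import all_boot all_order all_algebra all_field.
From mathcomp Require Import ring.
From Stdlib Require Import Classical.
Set Implicit Arguments. Unset Strict Implicit. Unset Printing Implicit Defensive.
Import GRing.Theory.
Local Open Scope ring_scope.

Section Words.
Variables (R : comNzRingType) (n : nat).
Implicit Types c : 'rV[R]_n.

Lemma word_polyE c : word_poly c = rVpoly c.
Proof.
rewrite [in RHS](row_sum_delta c) linear_sum; apply: eq_bigr => i _.
by rewrite linearZ /= -mul_polyC; congr (_ * _); exact/esym/rVpoly_delta.
Qed.

Fact word_poly_is_linear : linear (@word_poly R n).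
Proof. by move=> a u v; rewrite !word_polyE linearP. Qed.

HB.instance Definition _ := GRing.isLinear.Build R 'rV[R]_n {poly R} _
  (@word_poly R n) word_poly_is_linear.

Lemma size_word_poly c : (size (word_poly c) <= n)%N.
Proof. by rewrite word_polyE size_poly. Qed.

Lemma word_poly_inj : injective (@word_poly R n).
Proof. by move=> c c' /(congr1 (@poly_rV _ n)); rewrite !word_polyE !rVpolyK. Qed.

Lemma word_poly_cshift (lam : R) (c : 'rV[R]_n.+1) :
  word_poly (cshift lam c) =
  'X * word_poly c - (c 0 ord_max)%:P * ('X^(n.+1) - lam%:P).
Proof.
have shift0 : cshift lam c 0 ord0 = lam * c 0 ord_max.
  by rewrite mxE; congr (_ * c 0 _); apply/val_inj; rewrite /= modn_small.
have shiftS (i : 'I_n) : cshift lam c 0 (lift ord0 i) = c 0 (widen_ord (leqnSn n) i).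
  rewrite mxE /= mul1r; congr (c 0 _); apply: val_inj => /=.
  by rewrite modnDr modn_small //; apply: ltnW (ltn_ord i).
rewrite /word_poly big_ord_recl big_ord_recr /= mulrDr mulr_sumr.
under eq_bigr => i _ do rewrite shiftS /bump leq0n add1n.
under [X in _ = X + _ - _]eq_bigr => i _ do rewrite mulrCA -exprS.
by rewrite shift0 polyCM exprS; ring.
Qed.
End Words.

Section CodeIdeal.
Variables (R : comNzRingType) (n : nat) (lam : R).
Hypothesis n_gt0 : (0 < n)%N.
Local Notation g := ('X^n - lam%:P).

Lemma word_poly_cshift_mod (c : 'rV[R]_n) :
  exists a, word_poly (cshift lam c) = 'X * word_poly c - a%:P * g.
Proof. by case: n n_gt0 c => // k _ c; eexists; apply: word_poly_cshift. Qed.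

Lemma word_poly_inj_mod (c c' : 'rV[R]_n) (T : {poly R}) :
  word_poly c = word_poly c' + T * g -> c = c'.
Proof.
move=> eq_cc'; apply: word_poly_inj.
have [T0 | T_neq0] := eqVneq T 0; first by rewrite eq_cc' T0 mul0r addr0.
have : (size (T * g)%R <= n)%N.
  rewrite (_ : T * g = word_poly (c - c')); first exact: size_word_poly.
  by rewrite linearB /= eq_cc' addrAC subrr add0r.
rewrite size_Mmonic ?monicXnsubC // size_XnsubC // addnS /=.
by rewrite -{2}[n]add0n leq_add2r leqn0 size_poly_eq0 (negPf T_neq0).
Qed.

Lemma in_principal_constacyclic (h : {poly R}) :
  @constacyclic_code R n lam (in_principal lam h).
Proof.
split.
- by exists 0, 0; rewrite linear0 !mul0r addr0.
- move=> x y [a [b ex]] [a' [b' ey]]; exists (a + a'), (b + b').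
  by rewrite linearD /= ex ey; ring.
- move=> r x [a [b ex]]; exists (r%:P * a), (r%:P * b).
  by rewrite linearZ /= -mul_polyC ex; ring.
- move=> x [a [b ex]]; have [k ek] := word_poly_cshift_mod x.
  by exists ('X * a), ('X * b - k%:P); rewrite ek ex; ring.
Qed.

Lemma constacyclic_code_ext (C C' : 'rV[R]_n -> Prop) :
  (forall c, C c <-> C' c) -> constacyclic_code lam C' -> constacyclic_code lam C.
Proof. by move=> eqC [C'0 C'D C'Z C'S]; split=> [|x y|r x|x]; rewrite !eqC; auto. Qed.

(* The preimage of C under R[x] -> R[x]/<g>, a quotient identified with R^n. *)
Definition code_ideal (C : 'rV[R]_n -> Prop) (P : {poly R}) : Prop :=
  exists2 c, C c & exists T : {poly R}, word_poly c = P + T * g.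

Variable C : 'rV[R]_n -> Prop.
Hypothesis C_code : constacyclic_code lam C.

Lemma code_idealP P c T : code_ideal C P -> word_poly c = P + T * g -> C c.
Proof.
case=> c' Cc' [T' eq_c'] eq_c; suff -> : c = c' by [].
by apply: (word_poly_inj_mod (T := T - T')); rewrite eq_c eq_c'; ring.
Qed.

Lemma code_ideal0 : code_ideal C 0.
Proof.
by case: C_code => C0 _ _ _; exists 0 => //; exists 0; rewrite linear0 mul0r addr0.
Qed.

Lemma code_idealD P Q : code_ideal C P -> code_ideal C Q -> code_ideal C (P + Q).
Proof.
case: C_code => _ CD _ _ [c Cc [T eq_c]] [c' Cc' [T' eq_c']].
exists (c + c'); first exact: CD.
by exists (T + T'); rewrite linearD /= eq_c eq_c'; ring.
Qed.

Lemma code_idealZ a P : code_ideal C P -> code_ideal C (a%:P * P).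
Proof.
case: C_code => _ _ CZ _ [c Cc [T eq_c]].
exists (a *: c); first exact: CZ.
by exists (a%:P * T); rewrite linearZ /= -mul_polyC eq_c; ring.
Qed.

Lemma code_idealX P : code_ideal C P -> code_ideal C ('X * P).
Proof.
case: C_code => _ _ _ Cshift [c Cc [T eq_c]].
exists (cshift lam c); first exact: Cshift.
have [a ea] := word_poly_cshift_mod c.
by exists ('X * T - a%:P); rewrite ea eq_c; ring.
Qed.

Lemma code_idealM a P : code_ideal C P -> code_ideal C (a * P).
Proof.
move=> CP; elim/poly_ind: a => [|a r IH]; first by rewrite mul0r; apply: code_ideal0.
have -> : (a * 'X + r%:P) * P = 'X * (a * P) + r%:P * P by ring.
by apply: code_idealD; [apply: code_idealX | apply: code_idealZ].
Qed.
End CodeIdeal.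

Section PolyField.
Variable F : fieldType.
Implicit Types d f h P Q : {poly F}.

Lemma poly_ideal_principal (I : {poly F} -> Prop) Q :
    (forall P P', I P -> I P' -> I (P + P')) -> (forall a P, I P -> I (a * P)) ->
    I Q -> Q != 0 ->
  exists d, forall P, I P <-> d %| P.
Proof.
move=> ID IM; elim: {Q}(size Q).+1 {-2}Q (ltnSn (size Q)) => // N IHN Q.
rewrite ltnS => size_Q IQ Q_neq0.
case: (classic (exists2 Q', I Q' /\ Q' != 0 & (size Q' < size Q)%N)).
  by case=> Q' [IQ' Q'_neq0] lt_Q'Q; apply: (IHN Q') => //; apply: leq_trans size_Q.
move=> Q_min; exists Q => P; split => [IP | /dvdpP [a ->]]; last exact: IM.
have IPmod : I (P %% Q).
  have -> : P %% Q = P + (- (P %/ Q)) * Q by rewrite {2}(divp_eq P Q); ring.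
  by apply: ID => //; apply: IM.
apply/modp_eq0P/eqP; apply: contraT => Pmod_neq0.
by case: Q_min; exists (P %% Q); rewrite ?ltn_modp.
Qed.

Lemma dvdp_irredp_expM f h d a :
    irreducible_poly f -> coprimep f h -> d %| f ^+ a * h ->
  exists i k, [/\ (i <= a)%N, k %| h & d %= f ^+ i * k].
Proof.
move=> f_irr cop_fh; elim: a d => [|a IHa] d dvd_d.
  by exists 0%N, d; rewrite expr0 !mul1r in dvd_d *; split=> //; exact: eqpxx.
case: (boolP (f %| d)) => [/dvdpP [k def_d] | ndvd_fd]; last first.
  exists 0%N, d; rewrite expr0 mul1r; split => //; last exact: eqpxx.
  rewrite -(@Gauss_dvdpr _ _ (f ^+ a.+1)) // coprimep_sym coprimep_expl //.
  by rewrite irreducible_poly_coprime.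
have f_neq0 := irredp_neq0 f_irr.
rewrite def_d exprS -mulrA [f * _]mulrC dvdp_mul2r // in dvd_d.
have [i [k' [le_ia dvd_k' eqp_k]]] := IHa k dvd_d.
exists i.+1, k'; split => //.
by rewrite def_d exprS -mulrA [f * _]mulrC eqp_mul2r.
Qed.

Lemma dvdp_irredp_exp2 f1 f2 d a b :
    irreducible_poly f1 -> irreducible_poly f2 -> coprimep f1 f2 ->
    d %| f1 ^+ a * f2 ^+ b ->
  exists i j, [/\ (i <= a)%N, (j <= b)%N & d %= f1 ^+ i * f2 ^+ j].
Proof.
move=> f1_irr f2_irr cop12 dvd_d.
have [i [k [le_ia dvd_k eqp_d]]] := dvdp_irredp_expM f1_irr (coprimep_expr b cop12) dvd_d.
rewrite -[f2 ^+ b]mulr1 in dvd_k.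
have [j [k' [le_jb dvd_k' eqp_k]]] := dvdp_irredp_expM f2_irr (coprimep1 _) dvd_k.
exists i, j; split => //; apply: (eqp_trans eqp_d); apply: eqp_mull.
rewrite -[f2 ^+ j]mulr1; apply: (eqp_trans eqp_k); apply: eqp_mull.
by rewrite -size_poly_eq1 -dvdp1.
Qed.
End PolyField.

Section DualEmbedding.
Variable F : fieldType.
Implicit Types a b c d : F.

Lemma dual_addE a b c d : Dual a b + Dual c d = Dual (a + c) (b + d).
Proof. by []. Qed.

Lemma dual_oppE a b : - Dual a b = Dual (- a) (- b).
Proof. by []. Qed.

Lemma dual_mulE a b c d : Dual a b * Dual c d = Dual (a * c) (a * d + b * c).
Proof. by []. Qed.

Fact demb_is_nmod_morphism : nmod_morphism (@demb F).
Proof. by split=> [|a b] //; rewrite /demb dual_addE addr0. Qed.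

HB.instance Definition _ :=
  GRing.isNmodMorphism.Build F (dual F) (@demb F) demb_is_nmod_morphism.

Fact demb_is_monoid_morphism : monoid_morphism (@demb F).
Proof. by split=> [|a b] //; rewrite /demb dual_mulE mulr0 mul0r addr0. Qed.

HB.instance Definition _ :=
  GRing.isMonoidMorphism.Build F (dual F) (@demb F) demb_is_monoid_morphism.

Lemma dualE a b : Dual a b = demb a + Dual 0 1 * demb b.
Proof. by rewrite /demb dual_mulE dual_addE; congr Dual; ring. Qed.
End DualEmbedding.

Notation dual_lift := (map_poly (@demb _)).

Lemma dual_polyE (F : fieldType) (Q : {poly dual F}) :
  Q = dual_lift (map_poly (@dre F) Q)
      + (Dual 0 1)%:P * dual_lift (map_poly (@Defs.dim F) Q).
Proof.
apply/polyP => i; rewrite coefD coefCM !coef_map_id0 //.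
by case: (Q`_i) => a b; apply: dualE.
Qed.

Lemma in_principal_dvdp (F : fieldType) n (lam : dual F) (P Q : {poly F})
    (c : 'rV_n) :
  Q %| P -> in_principal lam (dual_lift P) c -> in_principal lam (dual_lift Q) c.
Proof.
move=> /dvdpP [k ->] [a [b def_c]].
by exists (a * dual_lift k), b; rewrite def_c rmorphM mulrA.
Qed.

Section DualCodes.
Variables (F : fieldType) (alpha beta : F) (n : nat).
Hypotheses (beta_neq0 : beta != 0) (n_gt0 : (0 < n)%N).
Local Notation lam := (Dual alpha beta).
Local Notation g := ('X^n - lam%:P).
Local Notation e := ('X^n - alpha%:P).

Lemma dual_lift_XnsubC : dual_lift e = g + (Dual 0 beta)%:P.
Proof.
rewrite rmorphB /= map_polyXn map_polyC -addrA; congr (_ + _).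
by rewrite -!polyCN -polyCD /= /demb !dual_oppE dual_addE addr0 addNr oppr0.
Qed.

(* Inverse of the isomorphism F[x]/<e^2> -> R[x]/<g> induced by dual_lift,
   since u = beta^-1 e modulo g. *)
Definition dual_repr (Q : {poly dual F}) : {poly F} :=
  map_poly (@dre F) Q + (beta^-1)%:P * e * map_poly (@Defs.dim F) Q.

Lemma dual_repr_mod Q : exists T, Q = dual_lift (dual_repr Q) + T * g.
Proof.
exists (- ((demb beta^-1)%:P * dual_lift (map_poly (@Defs.dim F) Q))).
have u_eq : (Dual 0 1)%:P = (demb beta^-1)%:P * (dual_lift e - g).
  rewrite dual_lift_XnsubC addrAC subrr add0r -polyCM /demb dual_mulE.
  by rewrite mulr0 mul0r addr0 mulVf.
rewrite {1}(dual_polyE Q) u_eq /dual_repr [in RHS]rmorphD !rmorphM /= map_polyC; ring.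
Qed.

Lemma dual_lift_XnsubC_sqr_mod : exists T, dual_lift (e ^+ 2) = T * g.
Proof.
have v2 : (Dual 0 beta)%:P ^+ 2 = 0 :> {poly dual F}.
  by rewrite -polyC_exp expr2 dual_mulE !mul0r mulr0 addr0.
exists (g + 2%:R * (Dual 0 beta)%:P); rewrite rmorphXn /= dual_lift_XnsubC.
by rewrite sqrrD v2 addr0; ring.
Qed.

Lemma constacyclic_dual_principal (C : 'rV[dual F]_n -> Prop) :
    constacyclic_code lam C ->
  exists2 d : {poly F}, d %| e ^+ 2 &
    forall c, C c <-> in_principal lam (dual_lift d) c.
Proof.
move=> C_code; pose I Q := code_ideal lam C (dual_lift Q).
have ID P Q : I P -> I Q -> I (P + Q) by rewrite /I rmorphD; apply: code_idealD.
have IM a P : I P -> I (a * P) by rewrite /I rmorphM; apply: code_idealM.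
have Ie2 : I (e ^+ 2).
  case: C_code => C0 _ _ _; have [T eT] := dual_lift_XnsubC_sqr_mod.
  by exists 0 => //; exists (- T); rewrite linear0 eT mulNr subrr.
have e2_neq0 : e ^+ 2 != 0 by rewrite expf_neq0 // monic_neq0 // monicXnsubC.
have [d Id] := poly_ideal_principal ID IM Ie2 e2_neq0.
exists d => [|c]; first exact/Id.
split=> [Cc | [a [b def_c]]].
  have [T def_c] := dual_repr_mod (word_poly c).
  have /Id /dvdpP [k def_r] : I (dual_repr (word_poly c)).
    by exists c => //; exists T.
  by exists (dual_lift k), T; rewrite {1}def_c def_r rmorphM.
apply: (code_idealP n_gt0 _ def_c).
by apply: code_idealM => //; apply/(Id d).
Qed.
End DualCodes.

Section Quadratics.
Variable F : fieldType.
Hypothesis two_neq0 : 2%:R != 0 :> F.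
Implicit Types b x : F.

Definition quad b : {poly F} := 'X^2 + b%:P * 'X + (b ^+ 2 / 2%:R)%:P.

Lemma size_quad b : size (quad b) = 3.
Proof.
rewrite /quad -addrA size_addl ?size_polyXn // size_MXaddC.
by case: ifP => // _; rewrite size_polyC; case: (b != 0).
Qed.

Lemma dual_lift_quad b :
  dual_lift (quad b) = 'X^2 + (demb b)%:P * 'X + (demb (b ^+ 2 / 2%:R))%:P.
Proof. by rewrite !rmorphD rmorphM /= !map_polyC map_polyXn map_polyX. Qed.

Lemma quad_mulN b : quad b * quad (- b) = 'X^4 + ((b ^+ 2 / 2%:R) ^+ 2)%:P.
Proof.
rewrite /quad sqrrN polyCN polyC_exp; set c := (b ^+ 2 / 2%:R)%:P.
have two_c : 2%:R * c = b%:P ^+ 2.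
  by rewrite -polyC_natr -polyCM -polyC_exp mulrC mulfVK.
have -> : ('X^2 + b%:P * 'X + c) * ('X^2 + - b%:P * 'X + c) =
          'X^4 + (2%:R * c - b%:P ^+ 2) * 'X^2 + c ^+ 2 by ring.
by rewrite two_c subrr mul0r addr0.
Qed.

Lemma quad_irreducible b :
  ~ (exists y, y ^+ 2 = - (b ^+ 2 / 2%:R) ^+ 2) -> irreducible_poly (quad b).
Proof.
move=> nsq; apply: cubic_irreducible => [|x]; first by rewrite size_quad.
apply/negP; rewrite /root !hornerE => /eqP quad_x; apply: nsq.
exists ((2%:R * x + b) * b / 2%:R).
have sq : (2%:R * x + b) ^+ 2 = - b ^+ 2.
  have -> : (2%:R * x + b) ^+ 2 = 4%:R * (x ^+ 2 + b * x + b ^+ 2 / 2%:R) - b ^+ 2.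
    by field.
  by rewrite quad_x mulr0 sub0r.
by rewrite expr_div_n exprMn sq; field; rewrite (natrM _ 2 2) two_neq0 mulf_neq0.
Qed.

Lemma quad_coprime b :
  irreducible_poly (quad b) -> b != 0 -> coprimep (quad b) (quad (- b)).
Proof.
move=> irr_b b_neq0; rewrite irreducible_poly_coprime //; apply/negP => dvd_b.
have lin_neq0 : (2%:R * b)%:P * 'X != 0.
  by rewrite mulf_neq0 ?polyX_eq0 // polyC_eq0 mulf_neq0.
have : quad b %| (2%:R * b)%:P * 'X.
  have -> : (2%:R * b)%:P * 'X = quad b - quad (- b).
    by rewrite /quad sqrrN polyCN polyCM polyC_natr; ring.
  by rewrite dvdp_sub.
move/(dvdp_leq lin_neq0); rewrite size_quad size_mulX ?polyC_eq0 ?mulf_neq0 //.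
by rewrite size_polyC mulf_neq0.
Qed.
End Quadratics.

Lemma XnsubC_exp_pchar (R : comNzRingType) p s k (a : R) : p \in [pchar R] ->
  ('X^k - a%:P) ^+ (p ^ s) = 'X^(k * p ^ s) - (a ^+ (p ^ s))%:P.
Proof.
move=> pchar_p; have p_nat : [pchar {poly R}].-nat (p ^ s)%N.
  by rewrite pnatX (pnatE _ (pcharf_prime pchar_p)) pchar_poly pchar_p.
by rewrite exprDn_pchar // exprNn_pchar // -exprM -polyC_exp.
Qed.

Section Factorization.
Variables (F : fieldType) (p s : nat) (alpha alpha0 gamma : F).
Hypotheses (pchar_p : p \in [pchar F]) (two_neq0 : 2%:R != 0 :> F).
Hypothesis alpha_nonsq : ~ exists y, y ^+ 2 = alpha.
Hypothesis alpha0_def : alpha0 ^+ (p ^ s) = alpha.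
Hypothesis gamma_def : gamma ^+ 4 + 4%:R * alpha0 = 0.

Lemma alpha0E : alpha0 = - (gamma ^+ 2 / 2%:R) ^+ 2.
Proof.
have four_neq0 : 4%:R != 0 :> F by rewrite (natrM _ 2 2) mulf_neq0.
have -> : alpha0 = (gamma ^+ 4 + 4%:R * alpha0 - gamma ^+ 4) / 4%:R by field.
by rewrite gamma_def sub0r; field; rewrite two_neq0 four_neq0.
Qed.

Lemma alpha0_nonsq : ~ exists y, y ^+ 2 = alpha0.
Proof.
by case=> y y2; apply: alpha_nonsq; exists (y ^+ (p ^ s)); rewrite -exprM mulnC exprM y2.
Qed.

Lemma quad_gamma_irreducible : irreducible_poly (quad gamma).
Proof.
apply: (quad_irreducible two_neq0) => -[y y2].
by apply: alpha0_nonsq; exists y; rewrite alpha0E.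
Qed.

Lemma quadN_gamma_irreducible : irreducible_poly (quad (- gamma)).
Proof.
apply: (quad_irreducible two_neq0) => -[y y2].
by apply: alpha0_nonsq; exists y; rewrite alpha0E -(sqrrN gamma).
Qed.

Lemma quad_gamma_coprime : coprimep (quad gamma) (quad (- gamma)).
Proof.
apply: (quad_coprime two_neq0 quad_gamma_irreducible); apply/eqP => gamma0.
by apply: alpha0_nonsq; exists 0; rewrite alpha0E gamma0 expr0n mul0r expr0n oppr0.
Qed.

Lemma XnsubC_sqr_factor :
  ('X^(4 * p ^ s) - alpha%:P) ^+ 2 =
  quad gamma ^+ (2 * p ^ s) * quad (- gamma) ^+ (2 * p ^ s).
Proof.
rewrite -alpha0_def -XnsubC_exp_pchar // alpha0E polyCN opprK -quad_mulN //.
by rewrite -exprM mulnC exprMn.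
Qed.
End Factorization.

Unset Implicit Arguments.
Set Strict Implicit.

Theorem theorem3p5 (p m s : nat) (F : finFieldType)
  (p_prime : prime p) (p_odd : odd p) (m_gt0 : (0 < m)%N) (s_gt0 : (0 < s)%N)
  (cardF : #|F| = (p ^ m)%N) (q_3mod4 : (p ^ m %% 4 = 3)%N)
  (alpha alpha0 gamma beta : F)
  (alpha_neq0 : alpha != 0) (alpha_nonsq : ~ exists y : F, y ^+ 2 = alpha)
  (alpha0_def : alpha0 ^+ (p ^ s) = alpha)
  (gamma_def : gamma ^+ 4 + 4%:R * alpha0 = 0)
  (beta_neq0 : beta != 0) :
  let lam : dual F := Dual alpha beta in
  let n := (4 * p ^ s)%N in
  let f1 : {poly dual F} :=
    'X^2 + (demb gamma)%:P * 'X + (demb (gamma ^+ 2 / 2%:R))%:P in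
  let f2 : {poly dual F} :=
    'X^2 - (demb gamma)%:P * 'X + (demb (gamma ^+ 2 / 2%:R))%:P in
  forall C : 'rV[dual F]_n -> Prop,
    constacyclic_code lam C <->
    exists i j : nat, [/\ (i <= 2 * p ^ s)%N, (j <= 2 * p ^ s)%N &
      forall c : 'rV[dual F]_n, C c <-> in_principal lam (f1 ^+ i * f2 ^+ j) c].
Proof.
move=> lam n f1 f2 C.
have pchar_p : p \in [pchar F] := card_finPcharP cardF p_prime.
have two_neq0 : 2%:R != 0 :> F.
  by rewrite -(dvdn_pcharf pchar_p) dvdn_prime2 //; apply: contraTneq p_odd => ->.
have n_gt0 : (0 < n)%N by rewrite /n muln_gt0 expn_gt0 (prime_gt0 p_prime).
split=> [C_code | [i [j [_ _ C_eq]]]]; last first.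
  by apply: (constacyclic_code_ext C_eq); apply: in_principal_constacyclic.
have [d dvd_d C_eq] := constacyclic_dual_principal beta_neq0 n_gt0 C_code.
rewrite (XnsubC_sqr_factor pchar_p two_neq0 alpha0_def gamma_def) in dvd_d.
have [i [j [le_i le_j /andP [dvd_d_ij dvd_ij_d]]]] := dvdp_irredp_exp2
  (quad_gamma_irreducible two_neq0 alpha_nonsq alpha0_def gamma_def)
  (quadN_gamma_irreducible two_neq0 alpha_nonsq alpha0_def gamma_def)
  (quad_gamma_coprime two_neq0 alpha_nonsq alpha0_def gamma_def) dvd_d.
have lift_f1 : dual_lift (quad gamma) = f1 by apply: dual_lift_quad.
have lift_f2 : dual_lift (quad (- gamma)) = f2.
  by rewrite dual_lift_quad sqrrN rmorphN polyCN mulNr.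
exists i, j; split => // c; rewrite C_eq -lift_f1 -lift_f2 -!rmorphXn -rmorphM.
by split; apply: in_principal_dvdp.
Qed.
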